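(* Let $\theta\in\mathbb{R}$ and let $g\in L^2(\mathbb{R}^3)$ be even or odd. Then for all $(u,\alpha)\in L^2\oplus L^2$, $$\mathbf{D}_g(\theta)(u,\alpha)=\big(u(x)e^{-i\theta A_g(x)},\ \alpha(k)-i\theta g(k)F(|u|^2)(k)\big).$$
   Context: For $g\in L^2$, $\mathbf{D}_g(\theta)(u,\alpha)=(u_\theta,\alpha_\theta)$ with $u_\theta(x)=u(x)\exp\{-i\theta A_g(x)+i\theta^2\mathrm{Im}\int F(|u|^2)(k)|g(k)|^2e^{ik\cdot x}dk\}$ and $\alpha_\theta(k)=\alpha(k)-i\theta g(k)F(|u|^2)(k)$, where $A_g(x)=\int(g(k)\bar\alpha(k)e^{-ik\cdot x}+\bar g(k)\alpha(k)e^{ik\cdot x})dk$ and $F(|u|^2)(k)=\int e^{-ik\cdot x}|u(x)|^2dx$. *)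

From HB Require Import structures.
From mathcomp Require Import all_boot all_order all_algebra.
From mathcomp Require Import all_classical all_reals all_analysis.
From mathcomp Require Import complex.
Set Implicit Arguments. Unset Strict Implicit. Unset Printing Implicit Defensive.
Import Order.TTheory GRing.Theory Num.Theory.
Import numFieldNormedType.Exports.
Local Open Scope classical_set_scope.
Local Open Scope ring_scope.
Local Open Scope complex_scope.

Definition R3 (R : realType) := ((R * R) * R)%type.

Definition leb3 (R : realType) :=
  ((@lebesgue_measure R \x @lebesgue_measure R) \x @lebesgue_measure R)%E.

Definition dot3 (R : realType) (k x : R3 R) : R :=
  k.1.1 * x.1.1 + k.1.2 * x.1.2 + k.2 * x.2.

Definition neg3 (R : realType) (k : R3 R) : R3 R := ((- k.1.1, - k.1.2), - k.2).

Definition cexp (R : realType) (z : R[i]) : R[i] :=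
  ((expR (complex.Re z) * cos (complex.Im z)) +i* (expR (complex.Re z) * sin (complex.Im z)))%C.

Definition cint (R : realType) (f : R3 R -> R[i]) : R[i] :=
  ((Rintegral (@leb3 R) setT (fun k => complex.Re (f k)))
    +i* (Rintegral (@leb3 R) setT (fun k => complex.Im (f k))))%C.

Definition cabs2 (R : realType) (z : R[i]) : R := complex.Re z ^+ 2 + complex.Im z ^+ 2.

Definition L2 (R : realType) (f : R3 R -> R[i]) : Prop :=
  measurable_fun setT (fun x => complex.Re (f x)) /\
  measurable_fun setT (fun x => complex.Im (f x)) /\
  (\int[@leb3 R]_x (cabs2 (f x))%:E < +oo)%E.

Definition even_fun (R : realType) (g : R3 R -> R[i]) := forall k, g (neg3 k) = g k.
Definition odd_fun (R : realType) (g : R3 R -> R[i]) := forall k, g (neg3 k) = - g k.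

Definition Fmod2 (R : realType) (u : R3 R -> R[i]) (k : R3 R) : R[i] :=
  cint (fun x => cexp (- ('i * (dot3 k x)%:C))%C * (cabs2 (u x))%:C).

Definition A_g (R : realType) (g alpha : R3 R -> R[i]) (x : R3 R) : R[i] :=
  cint (fun k => g k * (alpha k)^* * cexp (- ('i * (dot3 k x)%:C))%C
               + (g k)^* * alpha k * cexp ('i * (dot3 k x)%:C)%C).

Definition D_g (R : realType) (g : R3 R -> R[i]) (theta : R)
  (ua : (R3 R -> R[i]) * (R3 R -> R[i])) : (R3 R -> R[i]) * (R3 R -> R[i]) :=
  let u := ua.1 in let alpha := ua.2 in
  (fun x => u x * cexp (- ('i * theta%:C * A_g g alpha x)
       + 'i * (theta ^+ 2)%:C *
         (complex.Im (cint (fun k => Fmod2 u k * (cabs2 (g k))%:C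
                             * cexp ('i * (dot3 k x)%:C))))%:C)%C,
   fun k => alpha k - 'i * theta%:C * g k * Fmod2 u k)%C.

From HB Require Import structures.
From mathcomp Require Import all_boot all_order all_algebra.
From mathcomp Require Import all_classical all_reals all_analysis measurable_realfun.
From mathcomp Require Import complex ring lra.

(* The extra term θ² Im ∫ F(|u|²)(k) |g(k)|² e^{ik·x} dk in D_g(θ) vanishes.
   Since |u|² is real, F(|u|²)(-k) is the complex conjugate of F(|u|²)(k);
   |g|² is even because g is even or odd; and e^{i(-k)·x} is the conjugate
   of e^{ik·x}. So the integrand at -k is the conjugate of the integrand at k,
   and as Lebesgue measure on R³ is invariant under k ↦ -k, the integral
   equals its own conjugate, i.e. it is real. *)

Set Implicit Arguments. Unset Strict Implicit. Unset Printing Implicit Defensive.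
Import Order.TTheory GRing.Theory Num.Theory.
Local Open Scope classical_set_scope.
Local Open Scope ring_scope.

Section integral_measure_preserving_involution.
Local Open Scope ereal_scope.
Context d (T : measurableType d) (R : realType).
Variables (mu : {measure set T -> \bar R}) (phi : T -> T).
Hypothesis mphi : measurable_fun setT phi.
Hypothesis phiK : involutive phi.
Hypothesis mu_phi : forall A, measurable A -> pushforward mu phi A = mu A.

Import HBNNSimple.

Lemma nnsfun_comp_sintegral (h : {nnsfun T >-> R}) :
  exists h' : {nnsfun T >-> R}, h' =1 h \o phi /\ sintegral mu h' = sintegral mu h.
Proof.
have mh : measurable_fun setT (h \o phi) by exact: measurableT_comp.
have fh : finite_set (range (h \o phi)).
  by apply: sub_finite_set (@fimfunP _ _ h) => _ [x _ <-]; exists (phi x).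
have h0 x : (0 <= (h \o phi) x)%R by exact: fun_ge0.
pose h' : {nnsfun T >-> R} := HB.pack (h \o phi)
  (isMeasurableFun.Build _ _ _ _ _ mh) (FiniteImage.Build _ _ _ fh)
  (isNonNegFun.Build _ _ _ h0).
exists h'; split => //; rewrite /sintegral; apply: eq_fsbigr => r _.
have mhr : measurable (h @^-1` [set r]).
  by rewrite -[X in measurable X]setTI; exact: measurable_funP.
by rewrite -(mu_phi mhr).
Qed.

Let sintegrals_le (F : T -> \bar R) :=
  [set sintegral mu h | h in [set h : {nnsfun T >-> R} | forall x, (h x)%:E <= F x]].

Let sintegrals_le_comp (F : T -> \bar R) :
  sintegrals_le F `<=` sintegrals_le (F \o phi).
Proof.
move=> _ [h hF <-]; have [h' [h'E <-]] := nnsfun_comp_sintegral h.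
by exists h' => // x; rewrite h'E; exact: hF.
Qed.

Lemma ge0_integral_comp_involution (f : T -> \bar R) : (forall x, 0 <= f x) ->
  \int[mu]_x f (phi x) = \int[mu]_x f x.
Proof.
move=> f0; rewrite !ge0_integralTE//; congr ereal_sup.
apply/seteqP; split; last exact: sintegrals_le_comp.
have fE : f = (f \o phi) \o phi by apply/funext => x /=; rewrite phiK.
by rewrite [X in _ `<=` sintegrals_le X]fE; exact: sintegrals_le_comp.
Qed.

Lemma integral_comp_involution (f : T -> \bar R) :
  \int[mu]_x f (phi x) = \int[mu]_x f x.
Proof.
rewrite integralE [RHS]integralE.
rewrite -(ge0_integral_comp_involution (f := f^\+)) ?funepos_ge0//.
rewrite -(ge0_integral_comp_involution (f := f^\-)) ?funeneg_ge0//.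
by congr (_ - _); apply: eq_integral => x _; rewrite ?funeposE ?funenegE.
Qed.

End integral_measure_preserving_involution.

Section product_measure_pushforward.
Local Open Scope ereal_scope.
Context d1 d2 (T1 : measurableType d1) (T2 : measurableType d2) (R : realType).
Variables (m1 : {sigma_finite_measure set T1 -> \bar R})
  (m2 : {sigma_finite_measure set T2 -> \bar R}).

Lemma sigma_finite_product_measure1 : sigma_finite setT (m1 \x m2).
Proof.
have /sigma_finiteP[F [FT ndF Ffin]] := sigma_finiteT m1.
have /sigma_finiteP[G [GT ndG Gfin]] := sigma_finiteT m2.
exists (fun n => F n `*` G n).
  apply/seteqP; split => // -[x y] _.
  have [[n _ Fx] [k _ Gy]] : (\bigcup_n F n) x /\ (\bigcup_n G n) y.
    by rewrite -FT -GT.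
  exists (maxn n k) => //; split.
  - by move: x Fx; apply/subsetPset/ndF/leq_maxl.
  - by move: y Gy; apply/subsetPset/ndG/leq_maxr.
move=> n; have [mF Fn] := Ffin n; have [mG Gn] := Gfin n.
split; first exact: measurableX.
by rewrite product_measure1E// lte_mul_pinfty// ge0_fin_numE.
Qed.

(* The library declares no canonical σ-finite structure on [m1 \x m2]. *)
Definition product_measure1_sigma_finite : {sigma_finite_measure set (T1 * T2)%type -> \bar R} :=
  HB.pack (m1 \x m2) (Measure_isSigmaFinite.Build _ _ _ _ sigma_finite_product_measure1).

Variables (p1 : T1 -> T1) (p2 : T2 -> T2).
Hypotheses (mp1 : measurable_fun setT p1) (mp2 : measurable_fun setT p2).
Hypotheses (m1_p1 : forall A, measurable A -> pushforward m1 p1 A = m1 A)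
  (m2_p2 : forall A, measurable A -> pushforward m2 p2 A = m2 A).

Lemma measurable_fun_prod_map :
  measurable_fun setT (fun x : T1 * T2 => (p1 x.1, p2 x.2)).
Proof. by apply: measurable_fun_pair; exact: measurableT_comp. Qed.

Lemma pushforward_product_measure A : measurable A ->
  pushforward (m1 \x m2) (fun x : T1 * T2 => (p1 x.1, p2 x.2)) A = (m1 \x m2) A.
Proof.
move=> mA; apply/esym/(product_measure_unique (m' := pushforward (m1 \x m2) _)) => //.
  exact: measurable_fun_prod_map.
move=> mp B C mB mC /=.
have mpB : measurable (p1 @^-1` B) by rewrite -[X in measurable X]setTI; exact: mp1.
have mpC : measurable (p2 @^-1` C) by rewrite -[X in measurable X]setTI; exact: mp2.
rewrite [LHS](_ : _ = (m1 \x m2) (p1 @^-1` B `*` p2 @^-1` C))// product_measure1E//.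
by congr (_ * _); [exact: m1_p1 | exact: m2_p2].
Qed.

End product_measure_pushforward.

Section R3_reflection.
Variable R : realType.

(* Lebesgue measure is defined on the σ-algebra of measurableTypeR R, which
   differs from the default measurable structure of R. *)
Local Notation R3m := ((measurableTypeR R * measurableTypeR R) * measurableTypeR R)%type.

Let measurable_oppR : measurable_fun [set: measurableTypeR R] (-%R : measurableTypeR R -> _).
Proof. exact: oppr_measurable. Qed.

Lemma measurable_neg3 : measurable_fun [set: R3m] (@neg3 R).
Proof.
exact: measurable_fun_prod_map
  (measurable_fun_prod_map measurable_oppR measurable_oppR) measurable_oppR.
Qed.

Lemma neg3K : involutive (@neg3 R).
Proof. by case=> [[a b] c]; rewrite /neg3 /= !opprK. Qed.

Lemma dot3N (k x : R3 R) : dot3 (neg3 k) x = - dot3 k x.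
Proof. by rewrite /dot3 /neg3 /= !mulNr -!opprD. Qed.

Lemma leb3_neg3 (A : set R3m) : measurable A -> pushforward (@leb3 R) (@neg3 R) A = leb3 A.
Proof.
have mN := measurable_oppR; have lebN := @lebesgue_measureN R.
exact: (pushforward_product_measure
  (m1 := product_measure1_sigma_finite lebesgue_measure lebesgue_measure)
  (measurable_fun_prod_map mN mN) mN (pushforward_product_measure mN mN lebN lebN) lebN).
Qed.

Lemma Rintegral_neg3 (f : R3 R -> R) :
  \int[@leb3 R]_k f (neg3 k) = \int[@leb3 R]_k f k.
Proof.
by rewrite /Rintegral (integral_comp_involution measurable_neg3 neg3K leb3_neg3
  (fun k => (f k)%:E)).
Qed.

End R3_reflection.

Lemma fine_subC (R : numDomainType) (x y : \bar R) : fine (x - y)%E = - fine (y - x)%E.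
Proof. by case: x => [x||]; case: y => [y||] //=; rewrite ?opprB ?oppr0. Qed.

Lemma RintegralN d (T : measurableType d) (R : realType)
    (mu : {measure set T -> \bar R}) (D : set T) (f : T -> R) :
  \int[mu]_(x in D) - f x = - \int[mu]_(x in D) f x.
Proof.
rewrite /Rintegral integralE [in RHS]integralE fine_subC.
rewrite (_ : (fun x => (- f x)%:E) = \- (fun x => (f x)%:E))%E; last first.
  by apply/funext => x; rewrite EFinN.
by rewrite funeposN funenegN.
Qed.

Local Open Scope complex_scope.

Section complex_integral_R3.
Variable R : realType.
Implicit Types f : R3 R -> R[i].

Lemma cint_conj f : cint (fun k => (f k)^*) = (cint f)^*.
Proof.
rewrite /cint /conjc -RintegralN; congr (_ +i* _); apply: eq_Rintegral => k _.
all: by case: (f k).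
Qed.

Lemma cint_neg3 f : cint (fun k => f (neg3 k)) = cint f.
Proof.
congr (_ +i* _).
- exact: (Rintegral_neg3 (fun k => complex.Re (f k))).
- exact: (Rintegral_neg3 (fun k => complex.Im (f k))).
Qed.

End complex_integral_R3.

Section hermitian.
Variable R : realType.
Implicit Types (f g : R3 R -> R[i]) (z : R[i]).

Lemma Im_eq0_conjc z : z^* = z -> complex.Im z = 0.
Proof. case: z => a b [] /= ?; lra. Qed.

Lemma cexp_conjc z : cexp z^* = (cexp z)^*.
Proof. by case: z => a b; rewrite /cexp /= cosN sinN mulrN. Qed.

Lemma conjc_iR (t : R) : ('i * t%:C)^* = 'i * (- t)%:C.
Proof. by rewrite /conjc /=; congr (_ +i* _); ring. Qed.

Definition hermitian f := forall k, f (neg3 k) = (f k)^*.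

Lemma Im_cint_hermitian f : hermitian f -> complex.Im (cint f) = 0.
Proof.
move=> hf; apply: Im_eq0_conjc.
by rewrite -cint_conj -[RHS]cint_neg3; apply/congr1/funext => k; rewrite hf.
Qed.

Lemma hermitianM f g : hermitian f -> hermitian g -> hermitian (fun k => f k * g k).
Proof. by move=> hf hg k; rewrite hf hg rmorphM. Qed.

Lemma hermitian_real (w : R3 R -> R) :
  (forall k, w (neg3 k) = w k) -> hermitian (fun k => (w k)%:C).
Proof. by move=> hw k; rewrite hw conjc_real. Qed.

Lemma hermitian_cexp_dot3 (x : R3 R) : hermitian (fun k => cexp ('i * (dot3 k x)%:C)).
Proof. by move=> k; rewrite dot3N -conjc_iR cexp_conjc. Qed.

Lemma hermitian_Fmod2 (u : R3 R -> R[i]) : hermitian (Fmod2 u).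
Proof.
move=> k; rewrite /Fmod2 -cint_conj; apply/congr1/funext => x.
by rewrite dot3N -conjc_iR -rmorphN cexp_conjc rmorphM; congr (_ * _); exact/esym/conjc_real.
Qed.

End hermitian.

Lemma cabs2N (R : realType) (z : R[i]) : cabs2 (- z) = cabs2 z.
Proof. by case: z => a b; rewrite /cabs2 /= !sqrrN. Qed.

Theorem lemma8 (R : realType) (theta : R) (g : R3 R -> R[i])
  (hg : L2 g) (hpar : even_fun g \/ odd_fun g)
  (u alpha : R3 R -> R[i]) (hu : L2 u) (halpha : L2 alpha) :
  D_g g theta (u, alpha) =
  ((fun x => u x * cexp (- ('i * theta%:C * A_g g alpha x))),
   (fun k => alpha k - 'i * theta%:C * g k * Fmod2 u k))%C.
Proof.
(* The L² hypotheses are unused: cint is total, and the cancellation is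
   pointwise in the integrand, so it needs no integrability. *)
have g2_even k : cabs2 (g (neg3 k)) = cabs2 (g k).
  by case: hpar => gpar; rewrite gpar ?cabs2N.
have phase_real x : complex.Im (cint (fun k => Fmod2 u k * (cabs2 (g k))%:C
                                        * cexp ('i * (dot3 k x)%:C))) = 0.
  apply/Im_cint_hermitian/hermitianM; last exact: hermitian_cexp_dot3.
  by apply: hermitianM; [exact: hermitian_Fmod2 | exact: hermitian_real].
rewrite /D_g; congr (_, _); apply/funext => x.
by rewrite phase_real mulr0 addr0.
Qed.
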